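(* Let $A$ be a T-brace. (i) If $A$ is $\star$-hypercentral, then the additive group $A\star A$ is periodic. (ii) If $\beta$ is an ordinal and $a,b\in\zeta_\beta(\star,A)$, then $a\star b$ has finite order in $(A,+)$.
   Context: A (left) brace is a set $A$ with two operations $+$ and $\cdot$ such that $(A,+)$ is an abelian group, $(A,\cdot)$ is a group, and $a(b+c)=ab+ac-a$ for all $a,b,c\in A$. Put $a\star b=ab-a-b$; $A\star A$ is the subgroup of $(A,+)$ generated by all $x\star y$. A subbrace is a subset which is a subgroup of both $(A,+)$ and $(A,\cdot)$; a subbrace $L$ is an ideal if $a\star z, z\star a\in L$ for all $a\in A$, $z\in L$, and then the quotient brace $A/L$ is defined. $A$ is a T-brace if whenever $I$ is an ideal of $J$ and $J$ is an ideal of $A$, then $I$ is an ideal of $A$. The $\star$-center is $\zeta(\star,A)=\{a: a\star x=x\star a=0\ \forall x\}$; the upper $\star$-central series is $\zeta_0(\star,A)=0$, $\zeta_{\alpha+1}(\star,A)/\zeta_\alpha(\star,A)=\zeta(\star,A/\zeta_\alpha(\star,A))$, unions at limit ordinals, each term an ideal; its last term is $\zeta_\infty(\star,A)$, and $A$ is $\star$-hypercentral if $A=\zeta_\infty(\star,A)$. *)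

From HB Require Import structures.
From mathcomp Require Import all_boot all_algebra.
Set Implicit Arguments. Unset Strict Implicit. Unset Printing Implicit Defensive.
Import GRing.Theory.
Local Open Scope ring_scope.

(* A (left) brace: (V,+) is the abelian group of the zmodType V; the
   multiplicative group (V,.) is given by bmul/binv/bone. *)
Record brace (V : zmodType) := Brace {
  bmul : V -> V -> V;
  binv : V -> V;
  bone : V;
  bmulA : forall a b c, bmul a (bmul b c) = bmul (bmul a b) c;
  bmul1l : forall a, bmul bone a = a;
  bmul1r : forall a, bmul a bone = a;
  bmulVl : forall a, bmul (binv a) a = bone;
  bmulVr : forall a, bmul a (binv a) = bone;
  bdistr : forall a b c, bmul a (b + c) = bmul a b + bmul a c - a
}.

Section BraceDefs.
Variables (V : zmodType) (B : brace V).

Definition bstar (a b : V) : V := bmul B a b - a - b.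

Definition is_subbrace (S : V -> Prop) : Prop :=
  [/\ S 0, (forall x y, S x -> S y -> S (x - y)),
      S (bone B), (forall x y, S x -> S y -> S (bmul B x y))
    & (forall x, S x -> S (binv B x))].

Definition is_ideal_of (J I : V -> Prop) : Prop :=
  [/\ is_subbrace I, (forall x, I x -> J x)
    & (forall a z, J a -> I z -> I (bstar a z) /\ I (bstar z a))].

Definition is_ideal (I : V -> Prop) : Prop := is_ideal_of (fun _ => True) I.

Definition T_brace : Prop :=
  forall I J : V -> Prop, is_ideal_of J I -> is_ideal J -> is_ideal I.

Inductive in_star_star : V -> Prop :=
  | ss_gen x y : in_star_star (bstar x y)
  | ss_zero : in_star_star 0
  | ss_sub u v : in_star_star u -> in_star_star v -> in_star_star (u - v).

(* preimage of the star-center of A/S: zeta_{alpha+1} from zeta_alpha = S *)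
Definition star_center_over (S : V -> Prop) : V -> Prop :=
  fun a => forall x, S (bstar a x) /\ S (bstar x a).

(* The terms zeta_alpha(star,A) of the upper star-central series, for all
   ordinals alpha: the least class of subsets containing 0, closed under
   the successor step and under unions of arbitrary families of terms
   (this covers limit steps; the terms form a chain). *)
Inductive upper_star_term : (V -> Prop) -> Prop :=
  | ust_zero : upper_star_term (fun a => a = 0)
  | ust_succ S : upper_star_term S -> upper_star_term (star_center_over S)
  | ust_union (F : (V -> Prop) -> Prop) :
      (forall S, F S -> upper_star_term S) ->
      upper_star_term (fun a => exists2 S, F S & S a).

Definition star_hypercentral : Prop :=
  exists2 S, upper_star_term S & forall a, S a.

Definition finite_add_order (x : V) : Prop := exists2 n : nat, (0 < n)%N & x *+ n = 0.

End BraceDefs.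

(* The terms of the upper ⋆-central series form a chain (a Bourbaki–Witt tower
   argument), hence are additive subgroups closed under ⋆.  By induction along
   the series, a ⋆ g and g ⋆ a have finite additive order for every element a
   of a term and every g.  At a successor step, a is ⋆-central modulo a term S:
   J = ℤa + S is an ideal of A and I = ℤa + ℤ(a ⋆ a) + (S ∩ torsion) an ideal
   of J, hence of A because A is a T-brace.  Writing g ⋆ a = ka + m(a ⋆ a) + w
   in I and applying g ⋆ - shows that k(g ⋆ a) is torsion; similarly for a ⋆ g,
   using that - ⋆ g is additive modulo torsion on elements left-central modulo
   S.  So both are torsion as soon as a ⋆ a is, and a ⋆ a is handled by running
   the argument for 2a. *)

From HB Require Import structures.
From mathcomp Require Import all_boot all_algebra zify.
From Stdlib Require Import Classical.
Set Implicit Arguments. Unset Strict Implicit. Unset Printing Implicit Defensive.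
Import GRing.Theory.
Local Open Scope ring_scope.

Definition incl (T : Type) (S S' : T -> Prop) := forall x, S x -> S' x.

Section AddSubgroup.
Variable V : zmodType.

Definition add_subgroup (S : V -> Prop) := forall x y, S x -> S y -> S (x - y).

Variables (S : V -> Prop) (S_sub : add_subgroup S).

Lemma add_subgroup0 x : S x -> S 0.
Proof. by move=> Sx; rewrite -(subrr x); apply: S_sub. Qed.

Lemma add_subgroupN x : S x -> S (- x).
Proof. by move=> Sx; rewrite -sub0r; apply: S_sub => //; apply: add_subgroup0 Sx. Qed.

Lemma add_subgroupD x y : S x -> S y -> S (x + y).
Proof. by move=> Sx Sy; rewrite -[y]opprK; apply/S_sub/add_subgroupN. Qed.

Lemma add_subgroupMn x n : S x -> S (x *+ n).
Proof.
move=> Sx; elim: n => [|n IHn]; first by rewrite mulr0n; apply: add_subgroup0 Sx.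
by rewrite mulrS; apply: add_subgroupD.
Qed.

Lemma add_subgroupMz x k : S x -> S (x *~ k).
Proof.
by move=> Sx; case: k => n; rewrite ?NegzE ?mulrNz -pmulrn;
  [|apply: add_subgroupN]; apply: add_subgroupMn.
Qed.

End AddSubgroup.

Section Torsion.
Variable V : zmodType.
Local Notation tor := (@finite_add_order V).

Lemma tor0 : tor 0.
Proof. by exists 1%N; rewrite ?mulr1n. Qed.

Lemma tor_subgroup : add_subgroup tor.
Proof.
move=> x y [n n_gt0 nx] [m m_gt0 my]; exists (n * m)%N; first by rewrite muln_gt0 n_gt0.
by rewrite mulrnBl mulrnA nx mul0rn mulnC mulrnA my mul0rn subrr.
Qed.

Lemma tor_mulz_inv x k : k != 0 -> tor (x *~ k) -> tor x.
Proof.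
case: k => [m|m] k_neq0 [n n_gt0]; last first.
  rewrite NegzE mulrNz -pmulrn mulNrn -mulrnA => /eqP; rewrite oppr_eq0 => /eqP.
  by exists (m.+1 * n)%N; rewrite ?muln_gt0 ?n_gt0.
rewrite -pmulrn -mulrnA => xmn; exists (m * n)%N => //.
by rewrite muln_gt0 n_gt0 lt0n -(eqz_nat m 0) k_neq0.
Qed.

Lemma torN x : tor x -> tor (- x).
Proof. exact: (add_subgroupN tor_subgroup). Qed.

Lemma torD x y : tor x -> tor y -> tor (x + y).
Proof. exact: (add_subgroupD tor_subgroup). Qed.

Lemma torMz x k : tor x -> tor (x *~ k).
Proof. exact: (add_subgroupMz tor_subgroup). Qed.

Lemma tor_cyclic_decomp x e w y k m :
  tor e -> tor w -> y = x *~ k + e *~ m + w -> tor (y *~ k) -> tor y.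
Proof.
move=> tor_e tor_w ->; have [->|k_neq0] := eqVneq k 0; last exact: tor_mulz_inv.
by rewrite mulr0z add0r => _; apply/torD/tor_w/torMz.
Qed.

Definition tor_eq (x y : V) := tor (x - y).

Lemma tor_eq_refl x : tor_eq x x.
Proof. by rewrite /tor_eq subrr; apply: tor0. Qed.

Lemma tor_eq_trans x y z : tor_eq x y -> tor_eq y z -> tor_eq x z.
Proof. by move=> txy tyz; rewrite /tor_eq -[x](subrK y) -addrA; apply: torD. Qed.

Lemma tor_eq_tor x y : tor_eq x y -> tor x -> tor y.
Proof. by move=> txy tx; rewrite -(subKr x y); apply: tor_subgroup. Qed.

Lemma tor_eq0 x : tor x -> tor_eq x 0.
Proof. by rewrite /tor_eq subr0. Qed.

Lemma tor_eqD x y x' y' : tor_eq x x' -> tor_eq y y' -> tor_eq (x + y) (x' + y').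
Proof. by rewrite /tor_eq opprD addrACA; apply: torD. Qed.

Lemma tor_eqMz x y k : tor_eq x y -> tor_eq (x *~ k) (y *~ k).
Proof. by rewrite /tor_eq -mulrzBl; apply: torMz. Qed.

Lemma tor_eqN x y : tor_eq x y -> tor_eq (- x) (- y).
Proof. by rewrite /tor_eq -opprD; apply: torN. Qed.

Lemma tor_eq_morphMz (L : V -> Prop) (f : V -> V) :
    add_subgroup L ->
    (forall u v, L u -> L v -> tor_eq (f (u + v)) (f u + f v)) ->
  forall u k, L u -> tor_eq (f (u *~ k)) (f u *~ k).
Proof.
move=> L_sub fD u k Lu; have L0 : L 0 := add_subgroup0 L_sub Lu.
have tor_f0 : tor (f 0).
  by have /torN := fD 0 0 L0 L0; rewrite /tor_eq addr0 opprB addrK.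
have fN v : L v -> tor_eq (f (- v)) (- f v).
  move=> Lv; have := fD v (- v) Lv (add_subgroupN L_sub Lv).
  by rewrite subrr => /tor_eq_tor /(_ tor_f0); rewrite /tor_eq opprK addrC.
have fMn n : tor_eq (f (u *+ n)) (f u *+ n).
  elim: n => [|n IHn]; first by rewrite !mulr0n; apply: tor_eq0.
  rewrite !mulrS; apply: tor_eq_trans (fD _ _ Lu (add_subgroupMn L_sub n Lu)) _.
  by apply: tor_eqD IHn; apply: tor_eq_refl.
case: k => n; first by rewrite -!pmulrn.
rewrite NegzE !mulrNz -!pmulrn.
by apply: tor_eq_trans (fN _ (add_subgroupMn L_sub n.+1 Lu)) _; apply: tor_eqN.
Qed.

End Torsion.

Section BraceAlgebra.
Variables (V : zmodType) (B : brace V).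
Local Notation mul := (bmul B).
Local Notation inv := (binv B).
Local Notation "a ⋆ b" := (bstar B a b) (at level 40, left associativity).

Definition lam (a b : V) := mul a b - a.

Lemma lamD a : {morph lam a : b c / b + c}.
Proof. by move=> b c; rewrite /lam bdistr addrACA addrA. Qed.

Lemma lam_is_zmod_morphism a : zmod_morphism (lam a).
Proof. by move=> b c; apply/(@addIr _ (lam a c)); rewrite -lamD !subrK. Qed.

HB.instance Definition _ a :=
  GRing.isZmodMorphism.Build V V (lam a) (lam_is_zmod_morphism a).

Lemma bstarE a b : a ⋆ b = lam a b - b.
Proof. by []. Qed.

Lemma bstar_is_zmod_morphism a : zmod_morphism (bstar B a).
Proof. by move=> b c; rewrite !bstarE raddfB !opprD addrACA. Qed.

HB.instance Definition _ a :=
  GRing.isZmodMorphism.Build V V (bstar B a) (bstar_is_zmod_morphism a).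

Lemma mul_lam a b : mul a b = a + lam a b.
Proof. by rewrite /lam addrC subrK. Qed.

Lemma lam_bstar a b : lam a b = b + a ⋆ b.
Proof. by rewrite bstarE addrC subrK. Qed.

Lemma mul_bstar a b : mul a b = a + b + a ⋆ b.
Proof. by rewrite mul_lam lam_bstar addrA. Qed.

Lemma bone0 : bone B = 0.
Proof. by rewrite -(bmul1l B 0) mul_lam raddf0 addr0. Qed.

Lemma lam0l b : lam 0 b = b.
Proof. by rewrite /lam subr0 -bone0 bmul1l. Qed.

Lemma lamM a b c : lam (mul a b) c = lam a (lam b c).
Proof. by rewrite [lam b c]/lam raddfB /= /lam bmulA opprB addrA subrK. Qed.

Lemma lamKV a c : lam a (lam (inv a) c) = c.
Proof. by rewrite -lamM bmulVr bone0 lam0l. Qed.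

Lemma addE_mul u v : u + v = mul u (lam (inv u) v).
Proof. by rewrite mul_lam lamKV. Qed.

Lemma oppE_lam x : - x = lam x (inv x).
Proof. by rewrite /lam bmulVr bone0 sub0r. Qed.

Lemma invE_bstar x : inv x = - x - x ⋆ inv x.
Proof. by rewrite bstarE -oppE_lam opprB addrC subrK. Qed.

Lemma bstar0l x : 0 ⋆ x = 0.
Proof. by rewrite bstarE lam0l subrr. Qed.

Lemma bstarMl x y g : mul x y ⋆ g = x ⋆ (y ⋆ g) + y ⋆ g + x ⋆ g.
Proof. by rewrite !bstarE lamM subrK [lam x (_ - g)]raddfB /= addrA subrK. Qed.

Lemma is_ideal_of_subgroup (J I : V -> Prop) :
    is_subbrace B J -> add_subgroup I -> I 0 -> incl I J ->
    (forall a z, J a -> I z -> I (a ⋆ z) /\ I (z ⋆ a)) ->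
  is_ideal_of B J I.
Proof.
move=> [_ _ _ _ J_inv] I_sub I0 IJ I_star; split=> //; split=> //.
- by rewrite bone0.
- move=> a b Ia Ib; rewrite mul_bstar.
  exact: (add_subgroupD I_sub (add_subgroupD I_sub Ia Ib) (I_star a b (IJ a Ia) Ib).1).
- move=> a Ia; rewrite invE_bstar.
  exact: I_sub (add_subgroupN I_sub Ia) (I_star _ _ (J_inv a (IJ a Ia)) Ia).2.
Qed.

End BraceAlgebra.

Section UpperStarTerms.
Variables (V : zmodType) (B : brace V).
Local Notation "a ⋆ b" := (bstar B a b) (at level 40, left associativity).
Local Notation center := (star_center_over B).
Local Notation term := (upper_star_term B).

Definition star_closed (S : V -> Prop) := forall x g, S x -> S (x ⋆ g) /\ S (g ⋆ x).

Lemma center_incl S T : incl S T -> incl (center S) (center T).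
Proof. by move=> ST x Sx g; case: (Sx g) => /ST ? /ST. Qed.

Lemma center_nonempty S x : center S x -> S 0.
Proof. by case/(_ 0); rewrite raddf0. Qed.

Lemma star_closed_center S : star_closed S -> star_closed (center S).
Proof. by move=> S_closed x g /(_ g)[Sxg Sgx]; split=> h; apply: S_closed. Qed.

Lemma star_closed_incl_center S : star_closed S -> incl S (center S).
Proof. by move=> S_closed x Sx g; apply: S_closed. Qed.

Lemma term_star_closed S : term S -> star_closed S.
Proof.
elim=> {S} [x g ->|S _|F _ IH x g [T FT Tx]]; first by rewrite bstar0l raddf0.
  exact: star_closed_center.
by have [? ?] := IH T FT x g Tx; split; exists T.
Qed.

Lemma term_incl_center S : term S -> incl S (center S).
Proof. by move=> termS; apply: star_closed_incl_center (term_star_closed termS). Qed.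

(* Extreme points of the tower, as in Lang's proof of the Bourbaki–Witt theorem. *)
Definition extreme S :=
  forall T, term T -> incl T S -> ~ incl S T -> incl (center T) S.

Lemma extreme_cmp S T :
  term S -> extreme S -> term T -> incl T S \/ incl (center S) T.
Proof.
move=> termS extS; elim=> {T} [|T termT [T_S|CS_T]|F termF IH].
- have [S0|S0] := classic (S 0); first by left=> x ->.
  by right=> x /center_nonempty.
- have [S_T|S_T] := classic (incl S T); first by right; apply: center_incl.
  by left; apply: extS.
- by right=> x /CS_T; apply: term_incl_center.
- have [[T FT CS_T]|noT] := classic (exists2 T, F T & incl (center S) T).
    by right=> x /CS_T Tx; exists T.
  left=> x [T FT Tx]; case: (IH T FT) => [T_S|CS_T]; first exact: T_S.
  by case: noT; exists T.
Qed.

Lemma term_extreme S : term S -> extreme S.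
Proof.
elim=> {S} [|S termS extS|F termF IH] T termT T_sub S_nsub.
- by move=> x /center_nonempty T0; case: S_nsub => y ->.
- have [T_S|//] := extreme_cmp termS extS termT.
  have [S_T|S_T] := classic (incl S T); first exact: center_incl.
  by move=> x /(extS T termT T_S S_T); apply: term_incl_center.
- have [S FS S_T] : exists2 S, F S & ~ incl S T.
    apply: NNPP => noS; apply: S_nsub => x [S FS Sx].
    by apply: NNPP => Tx; apply: noS; exists S => // S_T; apply/Tx/S_T.
  have [T_S|CS_T] := extreme_cmp (termF S FS) (IH S FS) termT.
    by move=> x /(IH S FS T termT T_S S_T) Sx; exists S.
  by case: S_T => x /(term_incl_center (termF S FS)) /CS_T.
Qed.

Lemma term_total S T : term S -> term T -> incl S T \/ incl T S.
Proof.
move=> termS termT; have [|CS_T] := extreme_cmp termS (term_extreme termS) termT.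
  by right.
by left=> x /(term_incl_center termS) /CS_T.
Qed.

End UpperStarTerms.

Section LeftCentral.
Variables (V : zmodType) (B : brace V).
Local Notation mul := (bmul B).
Local Notation inv := (binv B).
Local Notation "a ⋆ b" := (bstar B a b) (at level 40, left associativity).
Local Notation center := (star_center_over B).

Variables (S : V -> Prop) (S_sub : add_subgroup S) (S_closed : star_closed B S).

Definition lcentral a := forall g, S (a ⋆ g).

Lemma lcentral_mul x y : lcentral x -> lcentral y -> lcentral (mul x y).
Proof.
move=> Lx Ly g; rewrite bstarMl.
by do 2?apply: add_subgroupD => //; apply: (S_closed _ (Ly g)).2.
Qed.

Lemma lcentral_inv x : lcentral x -> lcentral (inv x).
Proof.
move=> Lx g; have := bstarMl B (inv x) x g.
rewrite bmulVl bone0 bstar0l => /esym/eqP; rewrite addrC addr_eq0 => /eqP ->.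
by apply/(add_subgroupN S_sub)/(add_subgroupD S_sub _ (Lx g)); apply: (S_closed _ (Lx g)).2.
Qed.

Lemma lcentral_addS y s : lcentral y -> S s -> lcentral (y + s).
Proof.
move=> Ly Ss; rewrite (addE_mul B); apply: lcentral_mul => // g.
apply: (S_closed g _).1; rewrite lam_bstar.
exact: (add_subgroupD S_sub Ss (S_closed _ Ss).2).
Qed.

Lemma lcentral_subgroup : add_subgroup lcentral.
Proof.
have Lopp x : lcentral x -> lcentral (- x).
  by move=> Lx; rewrite (oppE_lam B) lam_bstar; apply/lcentral_addS/Lx/lcentral_inv.
move=> x y Lx /Lopp Ly; rewrite (addE_mul B); apply: lcentral_mul => //.
by rewrite lam_bstar; apply: lcentral_addS => //; apply: lcentral_inv.
Qed.

Lemma center_lcentral : incl (center S) lcentral.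
Proof. by move=> x Cx g; case: (Cx g). Qed.

Lemma center_subgroup : add_subgroup (center S).
Proof.
move=> x y Cx Cy g; split; last by rewrite raddfB; apply: S_sub; [case: (Cx g)|case: (Cy g)].
by apply: lcentral_subgroup => h; [case: (Cx h)|case: (Cy h)].
Qed.

End LeftCentral.

Lemma term_subgroup (V : zmodType) (B : brace V) S :
  upper_star_term B S -> add_subgroup S.
Proof.
elim=> {S} [x y -> ->|S termS S_sub|F termF IH x y [S FS Sx] [T FT Ty]].
- by rewrite subrr.
- exact: center_subgroup S_sub (term_star_closed termS).
have [ST|TS] := term_total (termF S FS) (termF T FT).
  by exists T => //; apply: (IH T FT) => //; apply: ST.
by exists S => //; apply: (IH S FS) => //; apply: TS.
Qed.

Section StarPeriodic.
Variables (V : zmodType) (B : brace V).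
Local Notation inv := (binv B).
Local Notation "a ⋆ b" := (bstar B a b) (at level 40, left associativity).
Local Notation center := (star_center_over B).
Local Notation tor := (@finite_add_order V).

Definition star_periodic (x : V) := forall g, tor (x ⋆ g) /\ tor (g ⋆ x).

Variables (S : V -> Prop) (S_sub : add_subgroup S) (S_closed : star_closed B S).
Hypothesis S_periodic : forall s, S s -> star_periodic s.
Hypothesis TB : T_brace B.

Lemma bstarSl_tor v s g : S s -> tor_eq ((v + s) ⋆ g) (v ⋆ g).
Proof.
move=> Ss; rewrite (addE_mul B) bstarMl /tor_eq addrK.
have St : S (lam B (inv v) s).
  by rewrite lam_bstar; apply: add_subgroupD => //; apply: (S_closed _ Ss).2.
by apply: torD; [apply: (S_periodic (S_closed g St).1 v).2|apply: (S_periodic St g).1].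
Qed.

Lemma bstarDl_tor g u v :
  lcentral B S u -> lcentral B S v -> tor_eq ((u + v) ⋆ g) (u ⋆ g + v ⋆ g).
Proof.
move=> Lu Lv; rewrite (addE_mul B) bstarMl lam_bstar [u ⋆ g + _]addrC.
have Ss : S (inv u ⋆ v) := lcentral_inv S_sub S_closed Lu v.
have Sw : S ((v + inv u ⋆ v) ⋆ g) := lcentral_addS S_sub S_closed Lv Ss g.
rewrite -[v ⋆ g]add0r; apply/tor_eqD/tor_eq_refl/tor_eqD/bstarSl_tor/Ss.
exact/tor_eq0/(S_periodic Sw u).2.
Qed.

Lemma bstarMzl_tor g u k : lcentral B S u -> tor_eq ((u *~ k) ⋆ g) (u ⋆ g *~ k).
Proof.
apply: (tor_eq_morphMz (f := bstar B ^~ g) (lcentral_subgroup S_sub S_closed)).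
exact: bstarDl_tor.
Qed.

Section CyclicIdeals.
Variables (x : V) (x_center : center S x).
Local Notation e := (x ⋆ x).

Definition Jx z := exists k s, S s /\ z = x *~ k + s.

Definition Ix z := exists k m w, [/\ S w, tor w & z = x *~ k + e *~ m + w].

Let center_sub := center_subgroup S_sub S_closed.
Let S_center := star_closed_incl_center S_closed.
Let S0 : S 0 := center_nonempty x_center.

Lemma Jx_subgroup : add_subgroup Jx.
Proof.
move=> _ _ [k [s [Ss ->]]] [k' [s' [Ss' ->]]].
by exists (k - k'), (s - s'); rewrite mulrzBr opprD addrACA; split; first exact: S_sub.
Qed.

Lemma S_Jx : incl S Jx.
Proof. by move=> s Ss; exists 0, s; rewrite mulr0z add0r. Qed.

Lemma Jx_center : incl Jx (center S).
Proof.
move=> _ [k [s [Ss ->]]].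
exact: (add_subgroupD center_sub (add_subgroupMz center_sub k x_center) (S_center Ss)).
Qed.

Lemma Jx_ideal : is_ideal B Jx.
Proof.
apply: is_ideal_of_subgroup Jx_subgroup (S_Jx S0) _ _ => //.
move=> a z _ /Jx_center /(_ a) [Sza Saz]; split; exact: S_Jx.
Qed.

Lemma Ix_subgroup : add_subgroup Ix.
Proof.
move=> _ _ [k [m [w [Sw tw ->]]]] [k' [m' [w' [Sw' tw' ->]]]].
exists (k - k'), (m - m'), (w - w'); split; [exact: S_sub|exact: tor_subgroup|].
by rewrite !mulrzBr [X in X + (w - w')]addrACA -opprD addrACA -opprD.
Qed.

Lemma Ix_tor w : S w -> tor w -> Ix w.
Proof. by move=> Sw tw; exists 0, 0, w; rewrite !mulr0z !add0r. Qed.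

Lemma Ix_e m : Ix (e *~ m).
Proof. by exists 0, m, 0; rewrite mulr0z add0r addr0; split=> //; apply: tor0. Qed.

Lemma Ix_x : Ix x.
Proof. by exists 1, 0, 0; rewrite mulr1z mulr0z !addr0; split=> //; apply: tor0. Qed.

Lemma Ix_Jx : incl Ix Jx.
Proof.
move=> _ [k [m [w [Sw _ ->]]]]; exists k, (e *~ m + w); rewrite addrA; split=> //.
exact: (add_subgroupD S_sub (add_subgroupMz S_sub m (x_center x).1) Sw).
Qed.

Lemma bstar_Jx_x j : Jx j -> Ix (j ⋆ x).
Proof.
move=> Jj; have [k [s [Ss j_eq]]] := Jj.
have Sjx : S (j ⋆ x) := (Jx_center Jj x).1.
have Se : S e := (x_center x).1.
rewrite -(subrKC (e *~ k) (j ⋆ x)); apply: (add_subgroupD Ix_subgroup (Ix_e k)).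
apply: Ix_tor; first exact: S_sub Sjx (add_subgroupMz S_sub k Se).
rewrite j_eq; apply: tor_eq_trans (bstarSl_tor _ _ Ss) _.
exact: bstarMzl_tor (center_lcentral x_center).
Qed.

Lemma Ix_bstarS g s : S s -> Ix (g ⋆ s).
Proof. by move=> Ss; apply: Ix_tor; [apply: (S_closed g Ss).2|apply: (S_periodic Ss g).2]. Qed.

Lemma bstar_Jx_Ix j i : Jx j -> Ix i -> Ix (j ⋆ i) /\ Ix (i ⋆ j).
Proof.
move=> Jj Ii; split.
  have [k [m [w [Sw _ ->]]]] := Ii; rewrite !raddfD !raddfMz /=.
  apply: (add_subgroupD Ix_subgroup); last exact: Ix_bstarS.
  apply: (add_subgroupD Ix_subgroup); apply: (add_subgroupMz Ix_subgroup).
    exact: bstar_Jx_x.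
  exact/Ix_bstarS/(x_center x).1.
have [k [s [Ss ->]]] := Jj; rewrite raddfD raddfMz /=.
apply: (add_subgroupD Ix_subgroup); last exact: Ix_bstarS.
exact/(add_subgroupMz Ix_subgroup)/bstar_Jx_x/Ix_Jx.
Qed.

Lemma Ix_ideal_of : is_ideal_of B Jx Ix.
Proof.
apply: is_ideal_of_subgroup Ix_subgroup (add_subgroup0 Ix_subgroup Ix_x) Ix_Jx _.
  by case: Jx_ideal.
by move=> a z Ja Iz; apply: bstar_Jx_Ix.
Qed.

Lemma Ix_bstar g : Ix (g ⋆ x) /\ Ix (x ⋆ g).
Proof. by have [_ _ Ix_star] := TB Ix_ideal_of Jx_ideal; apply: Ix_star Ix_x. Qed.

Lemma bstar_x_decomp g : exists k m w,
  [/\ S w, tor w, g ⋆ x = x *~ k + e *~ m + w & tor ((g ⋆ x) *~ k)].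
Proof.
have [k [m [w [Sw tw gx_eq]]]] := (Ix_bstar g).1; exists k, m, w; split=> //.
have Sgx : S (g ⋆ x) := (x_center g).2.
move: (S_periodic Sgx g).2; rewrite {1}gx_eq !raddfD !raddfMz /= => tor_ggx.
rewrite -(addrK ((g ⋆ e) *~ m + g ⋆ w) ((g ⋆ x) *~ k)) addrA.
apply: tor_subgroup tor_ggx _; apply: torD (S_periodic Sw g).2.
exact/torMz/(S_periodic (x_center x).1 g).2.
Qed.

Lemma x_bstar_decomp g : exists k m w,
  [/\ S w, tor w, x ⋆ g = x *~ k + e *~ m + w & tor ((x ⋆ g) *~ k)].
Proof.
have [k [m [w [Sw tw xg_eq]]]] := (Ix_bstar g).2; exists k, m, w; split=> //.
have Sxg : S (x ⋆ g) := (x_center g).1.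
apply: tor_eq_tor (S_periodic Sxg g).1; rewrite {1}xg_eq -addrA.
apply: tor_eq_trans (bstarSl_tor _ _ _) (bstarMzl_tor _ _ (center_lcentral x_center)).
exact: (add_subgroupD S_sub (add_subgroupMz S_sub m (x_center x).1) Sw).
Qed.

End CyclicIdeals.

(* In the ideal attached to 2a, a ⋆ 2a = 2 (a ⋆ a); when its ℤ(2a)-component
   vanishes, a ⋆ 2a is congruent to 2m (a ⋆ 2a) modulo torsion, and 1 - 2m is
   odd. *)
Lemma center_bstar_self_tor a : center S a -> tor (a ⋆ a).
Proof.
move=> Ca; have Cb := add_subgroupMz (center_subgroup S_sub S_closed) 2 Ca.
have [k [m [w [_ tw ab_eq tor_abk]]]] := bstar_x_decomp Cb a.
have ab2 : a ⋆ (a *~ 2) = (a ⋆ a) *~ 2 by rewrite raddfMz.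
apply: (@tor_mulz_inv _ _ 2) => //; rewrite -ab2.
have [k0|k_neq0] := eqVneq k 0; last exact: tor_mulz_inv k_neq0 tor_abk.
set y := a ⋆ (a *~ 2) in ab_eq *.
have bb : tor_eq ((a *~ 2) ⋆ (a *~ 2)) (y *~ 2).
  by rewrite raddfMz /y ab2; apply/tor_eqMz/bstarMzl_tor/(center_lcentral Ca).
have : tor_eq y (y *~ 2 *~ m).
  apply: tor_eq_trans _ (tor_eqMz m bb); rewrite ab_eq k0 mulr0z add0r.
  by rewrite /tor_eq addrAC subrr add0r.
rewrite /tor_eq -mulrzA -[y in y - _]mulr1z -mulrzBr; apply: tor_mulz_inv.
by apply/eqP; lia.
Qed.

Lemma center_star_periodic a : center S a -> star_periodic a.
Proof.
move=> Ca g; have tor_e := center_bstar_self_tor Ca; split.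
  have [k [m [w [_ tor_w ag_eq tor_agk]]]] := x_bstar_decomp Ca g.
  exact: tor_cyclic_decomp tor_e tor_w ag_eq tor_agk.
have [k [m [w [_ tor_w ga_eq tor_gak]]]] := bstar_x_decomp Ca g.
exact: tor_cyclic_decomp tor_e tor_w ga_eq tor_gak.
Qed.

End StarPeriodic.

Lemma term_star_periodic (V : zmodType) (B : brace V) S :
  T_brace B -> upper_star_term B S -> forall x, S x -> star_periodic B x.
Proof.
move=> TB; elim=> {S} [x -> g|S termS IH x Cx|F termF IH x [S FS Sx]].
- by rewrite bstar0l raddf0; split; apply: tor0.
- exact: center_star_periodic (term_subgroup termS) (term_star_closed termS) IH TB x Cx.
- exact: IH S FS x Sx.
Qed.

Theorem lemma4p1 (V : zmodType) (B : brace V) :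
  T_brace B ->
  (star_hypercentral B ->
     forall x, in_star_star B x -> finite_add_order x) /\
  (forall Z : V -> Prop, upper_star_term B Z ->
     forall a b, Z a -> Z b -> finite_add_order (bstar B a b)).
Proof.
move=> TB; split=> [[S termS S_all] x|Z termZ a b Za _].
  elim=> [a b||u v _ tor_u _ tor_v]; first exact: (term_star_periodic TB termS (S_all a) b).1.
    exact: tor0.
  exact: tor_subgroup tor_u tor_v.
exact: (term_star_periodic TB termZ Za b).1.
Qed.
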